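(* Consider a repeated $N$-player game with profit parameter $r>1$ in which, in each round, each player chooses cooperation ($c$) or defection ($d$); if $b$ players cooperate in a round, each cooperator receives $\frac{rb}{N}$ and each defector receives $\frac{rb}{N}+1$. Let a ZD alliance $\mathcal{A}$ consist of $n^{\mathcal{A}}$ players that always take the same action, and let the remaining $N-n^{\mathcal{A}}$ players be the outsiders. Suppose the alliance uses a zero-determinant strategy enforcing the linear relation $\pi^{-\mathcal{A}}=\chi\,\pi^{\mathcal{A}}+(1-\chi)\,l$ with $\chi=0$, where $\pi^{\mathcal{A}}$ and $\pi^{-\mathcal{A}}$ are the expected (stationary) per-member utilities of the alliance and of the outsiders. If $\frac{r-1}{2r}N<n^{\mathcal{A}}\le\frac{r-1}{r}N$, then the expected utility of the outsiders satisfies $$\frac{r\,(N-n^{\mathcal{A}})}{N}\le \pi^{-\mathcal{A}}\le \frac{r\,n^{\mathcal{A}}}{N}+1 .$$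
   Context: Per-outcome average payoffs: when the alliance plays $s\in\{c,d\}$ and there are $b$ cooperators in total, an alliance member gets $g^{\mathcal{A}}_{c,b}=\frac{rb}{N}$ ($n^{\mathcal{A}}\le b\le N$) or $g^{\mathcal{A}}_{d,b}=\frac{rb}{N}+1$ ($0\le b\le N-n^{\mathcal{A}}$), and the average outsider payoff is $g^{-\mathcal{A}}_{c,b}=\frac{(b-n^{\mathcal{A}})\frac{rb}{N}+(N-b)(\frac{rb}{N}+1)}{N-n^{\mathcal{A}}}$ ($n^{\mathcal{A}}\le b\le N$) or $g^{-\mathcal{A}}_{d,b}=\frac{b\frac{rb}{N}+(N-n^{\mathcal{A}}-b)(\frac{rb}{N}+1)}{N-n^{\mathcal{A}}}$ ($0\le b\le N-n^{\mathcal{A}}$). The game is sequential: the alliance members are among the first movers (leaders), whose cooperation probabilities depend on the previous round's outcome, while followers condition on the leaders' current moves. A zero-determinant strategy of the alliance is a strategy vector proportional to $\chi(\mathbf{g}^{\mathcal{A}}-l\mathbf{1})-(\mathbf{g}^{-\mathcal{A}}-l\mathbf{1})$, which forces $\pi^{-\mathcal{A}}=\chi\pi^{\mathcal{A}}+(1-\chi)l$ for the stationary distribution of the induced Markov chain; with $\chi=0$ this sets $\pi^{-\mathcal{A}}=l$. *)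

From HB Require Import structures.
From mathcomp Require Import all_boot all_order all_algebra.
Set Implicit Arguments. Unset Strict Implicit. Unset Printing Implicit Defensive.
Import Order.TTheory GRing.Theory Num.Theory.
Local Open Scope ring_scope.

(* An outcome of one round: the common action of the alliance
   (true = c, false = d) and the total number b of cooperators, 0 <= b <= N. *)
Definition state (N : nat) := (bool * 'I_N.+1)%type.

(* Outcomes compatible with an alliance of nA members all playing the same
   action: if the alliance plays c then nA <= b <= N, else 0 <= b <= N - nA. *)
Definition feasible (N nA : nat) (x : state N) : bool :=
  if x.1 then (nA <= x.2)%N else (x.2 <= N - nA)%N.

Section Payoffs.
Variables (R : realFieldType) (r : R) (N nA : nat).

Definition gA (x : state N) : R :=
  let b := (nat_of_ord x.2)%:R in
  if x.1 then r * b / N%:R else r * b / N%:R + 1.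

(* average payoff of the outsiders in outcome x = (s, b) *)
Definition gO (x : state N) : R :=
  let b := (nat_of_ord x.2)%:R in
  if x.1 then
    ((b - nA%:R) * (r * b / N%:R) + (N%:R - b) * (r * b / N%:R + 1))
      / (N%:R - nA%:R)
  else
    (b * (r * b / N%:R) + (N%:R - nA%:R - b) * (r * b / N%:R + 1))
      / (N%:R - nA%:R).

(* the "repeat" strategy: cooperate iff the alliance cooperated last round *)
Definition prep (x : state N) : R := if x.1 then 1 else 0.

(* p : cooperation probability of the alliance as a function of the previous
   outcome. *)
Definition zd_strategy (chi l : R) (p : state N -> R) : Prop :=
  exists phi : R, phi != 0 /\
    forall x, feasible nA x ->
      p x - prep x = phi * (chi * (gA x - l) - (gO x - l)).

(* M is a Markov chain on the outcomes of the repeated game in which the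
   alliance (a group of leaders) cooperates in the next round with
   probability p(previous outcome) (followers/other players arbitrary). *)
Definition game_chain (p : state N -> R) (M : state N -> state N -> R) : Prop :=
  [/\ forall x y, 0 <= M x y,
      forall x, \sum_y M x y = 1,
      forall x y, ~~ feasible nA y -> M x y = 0 &
      forall x, feasible nA x -> \sum_(y | y.1) M x y = p x].

Definition stationary (M : state N -> state N -> R) (v : state N -> R) : Prop :=
  [/\ forall x, 0 <= v x, \sum_x v x = 1 &
      forall y, \sum_x v x * M x y = v y].

Definition piA (v : state N -> R) : R := \sum_x v x * gA x.
Definition piO (v : state N -> R) : R := \sum_x v x * gO x.

End Payoffs.

From HB Require Import structures.
From mathcomp Require Import all_boot all_order all_algebra.
From mathcomp Require Import ring lra.

Set Implicit Arguments.
Unset Strict Implicit.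
Unset Printing Implicit Defensive.
Import Order.TTheory GRing.Theory Num.Theory.
Local Open Scope ring_scope.

(* Since the alliance's next action is drawn with probability p from the
   previous outcome, under a stationary distribution the alliance cooperates
   as often as the "repeat" strategy p_rep would predict; so p - p_rep, and
   with it the ZD combination, averages to zero, which is exactly
   pi^-A = chi pi^A + (1 - chi) l.  For chi = 0 this gives pi^-A = l, and
   0 <= p <= 1 constrains l: with phi the ZD scale, phi (l - g^-A) <= 0 at
   every outcome where the alliance cooperates and >= 0 where it defects.
   Comparing the outcomes where everybody cooperates (g^-A = r) and where
   everybody defects (g^-A = 1) forces phi > 0 as r > 1; then the outcomes
   where all outsiders do the opposite of the alliance give the bounds. *)

Section StationaryZD.
Variables (R : realFieldType) (r : R) (N nA : nat).
Variables (p : state N -> R) (M : state N -> state N -> R) (v : state N -> R).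
Hypothesis chainM : game_chain nA p M.
Hypothesis stat_v : stationary M v.

Lemma stationary_infeasible0 y : ~~ feasible nA y -> v y = 0.
Proof.
case: chainM stat_v => _ _ M_infeasible _ [_ _ v_inv] y_infeasible.
by rewrite -v_inv big1 // => x _; rewrite M_infeasible ?mulr0.
Qed.

Lemma stationary_coop_rate : \sum_x v x * p x = \sum_x v x * prep R x.
Proof.
case: chainM stat_v => _ _ _ M_coop [_ _ v_inv].
transitivity (\sum_x v x * \sum_(y | y.1) M x y).
  apply: eq_bigr => x _; have [x_feas|x_infeas] := boolP (feasible nA x).
    by rewrite M_coop.
  by rewrite stationary_infeasible0 // !mul0r.
under eq_bigr do rewrite mulr_sumr.
rewrite exchange_big /= big_mkcond /=; apply: eq_bigr => y _.
by rewrite v_inv /prep; case: y.1; rewrite ?mulr1 ?mulr0.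
Qed.

Lemma zd_stationary_piO chi l :
  zd_strategy r nA chi l p -> piO r nA v = chi * piA r v + (1 - chi) * l.
Proof.
case=> phi [phi_neq0 p_zd]; case: stat_v => _ v_sum1 _.
have : \sum_x v x * (p x - prep R x) = phi *
    (chi * piA r v + (1 - chi) * l - piO r nA v).
  have -> : (1 - chi) * l = \sum_x v x * ((1 - chi) * l).
    by rewrite -mulr_suml v_sum1 mul1r.
  rewrite /piA /piO mulr_sumr -big_split -sumrB mulr_sumr.
  apply: eq_bigr => x _ /=.
  have [x_feas|x_infeas] := boolP (feasible nA x).
    by rewrite p_zd //; ring.
  rewrite stationary_infeasible0 //; ring.
under eq_bigr do rewrite mulrBr.
rewrite sumrB stationary_coop_rate subrr => /esym/eqP.
by rewrite mulf_eq0 (negbTE phi_neq0) subr_eq0 => /eqP.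
Qed.

End StationaryZD.

(* outcome_ab: the alliance plays a and every outsider plays b *)
Definition outcome_cc (N : nat) : state N := (true, ord_max).
Definition outcome_dd (N : nat) : state N := (false, ord0).
Definition outcome_cd (N nA : nat) : state N := (true, inord nA).
Definition outcome_dc (N nA : nat) : state N := (false, inord (N - nA)).

Section ExtremeOutcomes.
Variables (R : realFieldType) (r : R) (N nA : nat).
Hypothesis nA_lt_N : (nA < N)%N.

Let N_neq0 : N%:R != 0 :> R.
Proof. by rewrite pnatr_eq0 -lt0n (leq_ltn_trans _ nA_lt_N). Qed.

Let N_nA_neq0 : N%:R - nA%:R != 0 :> R.
Proof. by rewrite subr_eq0 eqr_nat gtn_eqF. Qed.

Lemma feasible_cc : feasible nA (outcome_cc N).
Proof. exact: ltnW. Qed.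

Lemma feasible_dd : feasible nA (outcome_dd N).
Proof. by []. Qed.

Lemma feasible_cd : feasible nA (outcome_cd N nA).
Proof. by rewrite /feasible /= inordK // ltnS ltnW. Qed.

Lemma feasible_dc : feasible nA (outcome_dc N nA).
Proof. by rewrite /feasible /= inordK // ltnS leq_subr. Qed.

Lemma gO_cc : gO r nA (outcome_cc N) = r.
Proof. by rewrite /gO /=; field; apply/andP. Qed.

Lemma gO_dd : gO r nA (outcome_dd N) = 1.
Proof. by rewrite /gO /=; field; apply/andP. Qed.

Lemma gO_cd : gO r nA (outcome_cd N nA) = r * nA%:R / N%:R + 1.
Proof. by rewrite /gO /= inordK ?ltnS 1?ltnW //; field; apply/andP. Qed.

Lemma gO_dc : gO r nA (outcome_dc N nA) = r * (N%:R - nA%:R) / N%:R.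
Proof.
by rewrite /gO /= inordK ?ltnS ?leq_subr // natrB 1?ltnW //; field; apply/andP.
Qed.

End ExtremeOutcomes.

Section ZeroChiZD.
Variables (R : realFieldType) (r : R) (N nA : nat) (l phi : R).
Variable p : state N -> R.
Hypothesis p_prob : forall x, 0 <= p x <= 1.
Hypothesis p_zd : forall x, feasible nA x ->
  p x - prep R x = phi * (0 * (gA r x - l) - (gO r nA x - l)).

Lemma zd0_coop_le0 (x : state N) :
  feasible nA x -> x.1 -> phi * (l - gO r nA x) <= 0.
Proof.
move=> x_feas x_coop; have := p_zd x_feas; rewrite /prep x_coop mul0r sub0r.
by rewrite opprB => <-; rewrite subr_le0; case/andP: (p_prob x).
Qed.

Lemma zd0_defect_ge0 (x : state N) :
  feasible nA x -> ~~ x.1 -> 0 <= phi * (l - gO r nA x).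
Proof.
move=> x_feas x_defect; have := p_zd x_feas.
rewrite /prep (negbTE x_defect) mul0r sub0r opprB subr0 => <-.
by case/andP: (p_prob x).
Qed.

Lemma zd0_scale_gt0 : 1 < r -> (nA < N)%N -> phi != 0 -> 0 < phi.
Proof.
move=> r_gt1 nA_lt_N phi_neq0.
have := zd0_coop_le0 (feasible_cc nA_lt_N) erefl.
have := zd0_defect_ge0 (feasible_dd N nA) erefl.
rewrite gO_cc // gO_dd // => le_dd le_cc.
have : 0 <= phi * (r - 1) by lra.
by rewrite pmulr_lge0 ?subr_gt0 // le_eqVlt eq_sym (negbTE phi_neq0).
Qed.

Lemma zd0_le_coop (x : state N) :
  0 < phi -> feasible nA x -> x.1 -> l <= gO r nA x.
Proof.
move=> phi_gt0 x_feas x_coop.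
by rewrite -subr_le0 -(pmulr_rle0 _ phi_gt0) zd0_coop_le0.
Qed.

Lemma zd0_ge_defect (x : state N) :
  0 < phi -> feasible nA x -> ~~ x.1 -> gO r nA x <= l.
Proof.
move=> phi_gt0 x_feas x_defect.
by rewrite -subr_ge0 -(pmulr_rge0 _ phi_gt0) zd0_defect_ge0.
Qed.

End ZeroChiZD.

(* The lower bound on nA makes the interval of the theorem nonempty; here it
   only serves to exclude N = 0. *)
Lemma alliance_lt_total (R : realFieldType) (r : R) (N nA : nat) :
  1 < r -> (r - 1) / (2 * r) * N%:R < nA%:R -> nA%:R <= (r - 1) / r * N%:R ->
  (nA < N)%N.
Proof.
move=> r_gt1 nA_gt nA_le; rewrite -(ltr_nat R).
have t_gt0 : 0 < (r - 1) / r by rewrite divr_gt0 ?subr_gt0 //; lra.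
have t_lt1 : (r - 1) / r < 1 by rewrite ltr_pdivrMr ?mul1r; lra.
have half_t : (r - 1) / (2 * r) = (r - 1) / r / 2 by field; lra.
rewrite half_t in nA_gt; nra.
Qed.

Theorem theorem2 (R : realFieldType) (r : R) (N nA : nat)
  (p : state N -> R) (l : R)
  (M : state N -> state N -> R) (v : state N -> R) :
  1 < r ->
  (r - 1) / (2 * r) * N%:R < nA%:R ->
  nA%:R <= (r - 1) / r * N%:R ->
  (forall x, 0 <= p x <= 1) ->
  @zd_strategy R r N nA 0 l p ->
  @game_chain R N nA p M ->
  @stationary R N M v ->
  r * (N%:R - nA%:R) / N%:R <= @piO R r N nA v <= r * nA%:R / N%:R + 1.
Proof.
move=> r_gt1 nA_gt nA_le p_prob zd chain stat.
rewrite (zd_stationary_piO chain stat zd) mul0r add0r subr0 mul1r.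
case: zd => phi [phi_neq0 p_zd].
have nA_lt_N := alliance_lt_total r_gt1 nA_gt nA_le.
have phi_gt0 := zd0_scale_gt0 p_prob p_zd r_gt1 nA_lt_N phi_neq0.
rewrite -(gO_dc r nA_lt_N) -(gO_cd r nA_lt_N); apply/andP; split.
  exact (zd0_ge_defect p_prob p_zd phi_gt0 (feasible_dc N nA) erefl).
exact (zd0_le_coop p_prob p_zd phi_gt0 (feasible_cd nA_lt_N) erefl).
Qed.
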